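(* Let $\{s_n\}$, $\{t_n\}$ be sequences of positive reals with $s_n\ge t_n\ge2$ and $s_{n+1}\ge s_n+t_n$ for all $n\ge1$. For $n\ge1$ let $\mathcal{D}_n$ be the set of $(\sigma_1,\dots,\sigma_n)\in\mathbb{N}^n$ with $s_k<\sigma_k\le s_k+t_k$ for all $1\le k\le n$, and for $(\sigma_1,\dots,\sigma_n)\in\mathcal{D}_n$ let \[ J_n(\sigma_1,\dots,\sigma_n):=\bigcup_{j\in\mathbb{N},\ s_{n+1}<j\le s_{n+1}+t_{n+1}} \overline{I_{n+1}(\sigma_1,\dots,\sigma_n,j)}. \] Then for any two distinct $(\sigma_1,\dots,\sigma_n),(\sigma'_1,\dots,\sigma'_n)\in\mathcal{D}_n$, the intervals $J_n(\sigma_1,\dots,\sigma_n)$ and $J_n(\sigma'_1,\dots,\sigma'_n)$ are disjoint and separated by a gap of length at least \[ \varepsilon_n:=\frac{1}{2^{n+3}}\cdot\frac{1}{s_1\cdots s_n\, s_n}. \]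
   Context: Engel expansion: define $T:[0,1)\to[0,1)$ by $T(0)=0$ and $T(x)=x\lceil 1/x\rceil-1$ for $x\in(0,1)$. For irrational $x\in(0,1)$ set $d_1(x)=\lceil 1/x\rceil$ and $d_{n+1}(x)=d_1(T^n(x))$. For integers $2\le\sigma_1\le\cdots\le\sigma_m$, the cylinder $I_m(\sigma_1,\dots,\sigma_m)$ is the set of $x\in(0,1)$ with $d_k(x)=\sigma_k$ for $1\le k\le m$; it is the interval $[A_m,B_m)$ with $A_m=\sum_{k=1}^{m}\frac{1}{\sigma_1\cdots\sigma_k}$ and $B_m=\sum_{k=1}^{m-1}\frac{1}{\sigma_1\cdots\sigma_k}+\frac{1}{\sigma_1\cdots\sigma_{m-1}(\sigma_m-1)}$, of length $\frac{1}{\sigma_1\cdots\sigma_m(\sigma_m-1)}$. $\overline{A}$ denotes closure. *)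

From Stdlib Require Import Reals Lra Lia Arith.
From Stdlib Require Export Rtopology.
Open Scope R_scope.

(* Digit sequences are functions nat -> nat, used on indices 1..m. *)

Fixpoint prod_digits (sigma : nat -> nat) (k : nat) : R :=
  match k with
  | O => 1
  | S k' => prod_digits sigma k' * INR (sigma (S k'))
  end.

Fixpoint partial_sum (sigma : nat -> nat) (m : nat) : R :=
  match m with
  | O => 0
  | S m' => partial_sum sigma m' + / prod_digits sigma (S m')
  end.

(* Endpoints of the Engel cylinder I_m(sigma_1,...,sigma_m) = [A_m, B_m). *)
Definition cyl_A (sigma : nat -> nat) (m : nat) : R := partial_sum sigma m.
Definition cyl_B (sigma : nat -> nat) (m : nat) : R :=
  partial_sum sigma (m - 1) +
  / (prod_digits sigma (m - 1) * (INR (sigma m) - 1)).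

Definition cylinder (sigma : nat -> nat) (m : nat) : R -> Prop :=
  fun x => cyl_A sigma m <= x < cyl_B sigma m.

Definition extend_digits (sigma : nat -> nat) (n j : nat) : nat -> nat :=
  fun k => if Nat.eqb k (S n) then j else sigma k.

Definition in_D (s t : nat -> R) (n : nat) (sigma : nat -> nat) : Prop :=
  forall k, (1 <= k <= n)%nat -> s k < INR (sigma k) <= s k + t k.

Definition J_set (s t : nat -> R) (n : nat) (sigma : nat -> nat) : R -> Prop :=
  fun x => exists j : nat,
    s (S n) < INR j <= s (S n) + t (S n) /\
    adherence (cylinder (extend_digits sigma n j) (S n)) x.

Fixpoint prod_seq (s : nat -> R) (n : nat) : R :=
  match n with
  | O => 1
  | S n' => prod_seq s n' * s (S n')
  end.

Definition eps_n (s : nat -> R) (n : nat) : R :=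
  / 2 ^ (n + 3) * / (prod_seq s n * s n).

(* Let x lie in J_n(σ) and y in J_n(σ'), and let k+1 be the first index at which σ and σ'
   differ, say σ_{k+1} < σ'_{k+1}; write τ, τ' for the (n+1)-digit sequences whose closed
   cylinders contain x and y.  Engel cylinders are nested, so x >= A_{k+2}(τ) and
   y <= B_{k+2}(τ').  With Q the common product of the first k digits, a = τ_{k+1},
   b = τ'_{k+1}, c = τ_{k+2}, c' = τ'_{k+2},
     A_{k+2}(τ) - B_{k+2}(τ') = (1/a - 1/b + 1/(ac) - 1/(b(c'-1))) / Q,
   and the growth conditions on (s_n), (t_n) bound this below by 1/(4Qb^2).  Finally
   Q <= 2^k s_1...s_k and b <= 2 s_{k+1} give 1/(4Qb^2) >= ε_{k+1} >= ε_n. *)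

From Stdlib Require Import Reals Lra Lia.
Open Scope R_scope.

Lemma adherence_Ico_bounds (A B x : R) :
  adherence (fun z => A <= z < B) x -> A <= x <= B.
Proof.
  intros hx.
  assert (hnear : forall e : posreal, exists z, Rabs (z - x) < e /\ A <= z < B).
  { intros e. destruct (hx (disc x e)) as [z [hz hAB]].
    - exists e. intros z hz. exact hz.
    - exists z. split; [exact hz | exact hAB]. }
  split.
  - destruct (Rle_or_lt A x) as [h | h]; [exact h |].
    destruct (hnear (mkposreal (A - x) ltac:(lra))) as [z [hz hAB]].
    apply Rabs_def2 in hz. simpl in hz. lra.
  - destruct (Rle_or_lt x B) as [h | h]; [exact h |].
    destruct (hnear (mkposreal (x - B) ltac:(lra))) as [z [hz hAB]].
    apply Rabs_def2 in hz. simpl in hz. lra.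
Qed.

Section EngelCylinders.

Variables (sigma : nat -> nat) (m : nat).
Hypothesis digit_ge2 : forall i, (1 <= i <= m)%nat -> (2 <= sigma i)%nat.
Hypothesis digit_mono :
  forall i, (1 <= i)%nat -> (S i <= m)%nat -> (sigma i <= sigma (S i))%nat.

Lemma prod_digits_pos i : (i <= m)%nat -> 0 < prod_digits sigma i.
Proof.
  induction i as [| i IH]; intros hi; simpl; [lra |].
  apply Rmult_lt_0_compat; [apply IH; lia |].
  apply lt_0_INR. specialize (digit_ge2 (S i) ltac:(lia)). lia.
Qed.

Lemma partial_sum_le i j :
  (i <= j)%nat -> (j <= m)%nat -> partial_sum sigma i <= partial_sum sigma j.
Proof.
  induction 1 as [| j hij IH]; intros hj; [lra |].
  pose proof (Rinv_0_lt_compat _ (prod_digits_pos (S j) hj)) as hterm.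
  specialize (IH ltac:(lia)). simpl in *. lra.
Qed.

Lemma cyl_B_succ_le i :
  (1 <= i)%nat -> (S i <= m)%nat -> cyl_B sigma (S i) <= cyl_B sigma i.
Proof.
  intros hi him. destruct i as [| i]; [lia |].
  unfold cyl_B. replace (S (S i) - 1)%nat with (S i) by lia.
  replace (S i - 1)%nat with i by lia. simpl.
  pose proof (prod_digits_pos i ltac:(lia)) as hp.
  assert (hu : 2 <= INR (sigma (S i))).
  { apply (le_INR 2). apply digit_ge2. lia. }
  assert (huv : INR (sigma (S i)) <= INR (sigma (S (S i)))).
  { apply le_INR. apply digit_mono; lia. }
  set (p := prod_digits sigma i) in *.
  set (u := INR (sigma (S i))) in *. set (v := INR (sigma (S (S i)))) in *.
  assert (hsplit : / (p * (u - 1)) - / (p * u) = / (p * u * (u - 1))).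
  { field. repeat split; lra. }
  assert (/ (p * u * (v - 1)) <= / (p * u * (u - 1))).
  { assert (0 < p * u) by nra.
    apply Rinv_le_contravar; [| apply Rmult_le_compat_l]; nra. }
  lra.
Qed.

Lemma cyl_B_le i j :
  (1 <= i)%nat -> (i <= j)%nat -> (j <= m)%nat -> cyl_B sigma j <= cyl_B sigma i.
Proof.
  intros hi. induction 1 as [| j hij IH]; intros hj; [lra |].
  pose proof (cyl_B_succ_le j ltac:(lia) hj). specialize (IH ltac:(lia)). lra.
Qed.

End EngelCylinders.

Lemma prod_digits_ext (tau tau' : nat -> nat) k :
  (forall i, (1 <= i <= k)%nat -> tau i = tau' i) ->
  prod_digits tau k = prod_digits tau' k.
Proof.
  induction k as [| k IH]; intros hagree; simpl; [reflexivity |].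
  rewrite IH by (intros i hi; apply hagree; lia).
  rewrite (hagree (S k)) by lia. reflexivity.
Qed.

Lemma partial_sum_ext (tau tau' : nat -> nat) k :
  (forall i, (1 <= i <= k)%nat -> tau i = tau' i) ->
  partial_sum tau k = partial_sum tau' k.
Proof.
  induction k as [| k IH]; intros hagree; cbn [partial_sum]; [reflexivity |].
  rewrite IH by (intros i hi; apply hagree; lia).
  rewrite (prod_digits_ext tau tau' (S k) hagree). reflexivity.
Qed.

Lemma cyl_A_sub_cyl_B (tau tau' : nat -> nat) k :
  (forall i, (1 <= i <= k)%nat -> tau i = tau' i) ->
  let a := INR (tau (S k)) in let c := INR (tau (S (S k))) in
  let b := INR (tau' (S k)) in let c' := INR (tau' (S (S k))) in
  cyl_A tau (S (S k)) - cyl_B tau' (S (S k)) =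
  / prod_digits tau k * (/ a - / b + / (a * c) - / (b * (c' - 1))).
Proof.
  intros hagree a c b c'. unfold cyl_A, cyl_B.
  replace (S (S k) - 1)%nat with (S k) by lia. simpl.
  rewrite (prod_digits_ext tau' tau k), (partial_sum_ext tau' tau k)
    by (intros i hi; symmetry; apply hagree; exact hi).
  rewrite !Rinv_mult. fold a b c c'. ring.
Qed.

(* Used with d = c' - 1 and S = s_{k+2}.  After 1/a >= 1/(b-1) and 1/(ac) >= 1/(2bS):
   if S <= 2b the term 1/(2bS) suffices, otherwise d > 2b - 1 makes
   1/(b-1) - 1/b - 1/(bd) >= 1/(4b^2). *)
Lemma engel_gap_lower_bound a b c d S :
  0 < a -> a <= b - 1 -> 0 < c -> c <= 2 * S -> b <= d -> S - 1 < d -> b <= S ->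
  / (4 * b * b) <= / a - / b + / (a * c) - / (b * d).
Proof.
  intros ha hab hc hcS hbd hSd hbS.
  assert (h1 : / (b - 1) <= / a) by (apply Rinv_le_contravar; lra).
  assert (h2 : / (b * (2 * S)) <= / (a * c)).
  { apply Rinv_le_contravar; [nra | apply Rmult_le_compat; lra]. }
  assert (hsplit : / (b - 1) - / b - / (b * d) = (d - b + 1) / (b * (b - 1) * d)).
  { field. repeat split; lra. }
  assert (hden : 0 < b * (b - 1) * d) by (apply Rmult_lt_0_compat; nra).
  destruct (Rle_or_lt S (2 * b)) as [hS | hS].
  - assert (/ (4 * b * b) <= / (b * (2 * S))) by (apply Rinv_le_contravar; nra).
    assert (0 <= (d - b + 1) / (b * (b - 1) * d)).
    { apply Rmult_le_pos; [lra | left; apply Rinv_0_lt_compat; exact hden]. }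
    lra.
  - assert (/ (4 * b * b) <= (d - b + 1) / (b * (b - 1) * d)).
    { assert (hdiff : (d - b + 1) / (b * (b - 1) * d) - / (4 * b * b)
                      = (4 * b * (d - b + 1) - (b - 1) * d) / (4 * b * (b * (b - 1) * d))).
      { field. repeat split; lra. }
      assert (0 <= (4 * b * (d - b + 1) - (b - 1) * d) / (4 * b * (b * (b - 1) * d))).
      { apply Rmult_le_pos; [nra | left; apply Rinv_0_lt_compat; nra]. }
      lra. }
    assert (0 <= / (b * (2 * S))) by (left; apply Rinv_0_lt_compat; nra).
    lra.
Qed.

Lemma J_set_cylinder_bounds s t n sigma x :
  in_D s t n sigma -> J_set s t n sigma x ->
  exists tau, in_D s t (S n) tau /\ (forall i, (i <= n)%nat -> tau i = sigma i) /\
    cyl_A tau (S n) <= x <= cyl_B tau (S n).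
Proof.
  intros hD [j [hj hx]]. exists (extend_digits sigma n j). unfold extend_digits.
  split; [| split].
  - intros k hk. destruct (Nat.eqb_spec k (S n)) as [-> | hkn]; [exact hj |].
    apply hD. lia.
  - intros i hi. destruct (Nat.eqb_spec i (S n)); [lia | reflexivity].
  - exact (adherence_Ico_bounds _ _ _ hx).
Qed.

Lemma first_difference (f g : nat -> nat) N :
  (exists k, (1 <= k <= N)%nat /\ f k <> g k) ->
  exists k, (S k <= N)%nat /\ (forall i, (1 <= i <= k)%nat -> f i = g i) /\
    f (S k) <> g (S k).
Proof.
  intros [k [hk hfg]].
  enough (hcases : (forall i, (1 <= i <= N)%nat -> f i = g i) \/
    exists k, (S k <= N)%nat /\ (forall i, (1 <= i <= k)%nat -> f i = g i) /\
      f (S k) <> g (S k)).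
  { destruct hcases as [hall | hfirst]; [contradiction (hfg (hall k hk)) | exact hfirst]. }
  clear k hk hfg. induction N as [| N [hall | [k0 [hk0 rest]]]].
  - left. intros i hi. lia.
  - destruct (Nat.eq_dec (f (S N)) (g (S N))) as [e | e].
    + left. intros i hi. destruct (Nat.eq_dec i (S N)) as [-> | hiN]; [exact e |].
      apply hall. lia.
    + right. exists N. repeat split; [lia | exact hall | exact e].
  - right. exists k0. split; [lia | exact rest].
Qed.

Section GrowthConditions.

Variables s t : nat -> R.
Hypothesis hst : forall n, (1 <= n)%nat -> s n >= t n /\ t n >= 2.
Hypothesis hrec : forall n, (1 <= n)%nat -> s (S n) >= s n + t n.

Lemma s_le i j : (1 <= i)%nat -> (i <= j)%nat -> s i <= s j.
Proof.
  intros hi. induction 1 as [| j hij IH]; [lra |].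
  pose proof (hst j ltac:(lia)). pose proof (hrec j ltac:(lia)). lra.
Qed.

Lemma prod_seq_ge1 i : 1 <= prod_seq s i.
Proof.
  induction i as [| i IH]; simpl; [lra |].
  pose proof (hst (S i) ltac:(lia)). nra.
Qed.

Lemma prod_seq_le i j : (i <= j)%nat -> prod_seq s i <= prod_seq s j.
Proof.
  induction 1 as [| j hij IH]; simpl; [lra |].
  pose proof (hst (S j) ltac:(lia)). pose proof (prod_seq_ge1 j). nra.
Qed.

Lemma eps_n_pos n : (1 <= n)%nat -> 0 < eps_n s n.
Proof.
  intros hn. unfold eps_n. pose proof (hst n hn). pose proof (prod_seq_ge1 n).
  apply Rmult_lt_0_compat; apply Rinv_0_lt_compat; [apply pow_lt |]; nra.
Qed.

Lemma eps_n_le i j : (1 <= i)%nat -> (i <= j)%nat -> eps_n s j <= eps_n s i.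
Proof.
  intros hi hij. unfold eps_n. rewrite <- !Rinv_mult.
  pose proof (hst i hi). pose proof (s_le i j hi hij).
  pose proof (prod_seq_ge1 i). pose proof (prod_seq_le i j hij).
  pose proof (Rle_pow 2 (i + 3) (j + 3) ltac:(lra) ltac:(lia)).
  pose proof (pow_lt 2 (i + 3) ltac:(lra)).
  assert (0 < prod_seq s i * s i) by nra.
  apply Rinv_le_contravar; [apply Rmult_lt_0_compat; assumption |].
  apply Rmult_le_compat; [lra | nra | lra | apply Rmult_le_compat; lra].
Qed.

Lemma eps_n_le_inv k Q b :
  0 < Q -> Q <= 2 ^ k * prod_seq s k -> 0 < b <= 2 * s (S k) ->
  eps_n s (S k) <= / (Q * (4 * b * b)).
Proof.
  intros hQ hQle hb. unfold eps_n. rewrite <- Rinv_mult.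
  assert (0 < 4 * b * b) by nra.
  apply Rinv_le_contravar; [apply Rmult_lt_0_compat; assumption |].
  replace (2 ^ (S k + 3) * (prod_seq s (S k) * s (S k)))
    with ((2 ^ k * prod_seq s k) * (4 * (2 * s (S k)) * (2 * s (S k))))
    by (cbn [prod_seq]; rewrite pow_add; simpl; ring).
  apply Rmult_le_compat; [lra | nra | exact hQle |].
  apply Rmult_le_compat; nra.
Qed.

Section Digits.

Variables (m : nat) (tau : nat -> nat).
Hypothesis hD : in_D s t m tau.

Lemma in_D_digit_gt2 i : (1 <= i <= m)%nat -> 2 < INR (tau i).
Proof. intros hi. pose proof (hD i hi). pose proof (hst i (proj1 hi)). lra. Qed.

Lemma in_D_digit_ge2 i : (1 <= i <= m)%nat -> (2 <= tau i)%nat.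
Proof. intros hi. apply Nat.lt_le_incl, INR_lt, in_D_digit_gt2, hi. Qed.

Lemma in_D_digit_lt i : (1 <= i)%nat -> (S i <= m)%nat -> (tau i < tau (S i))%nat.
Proof.
  intros hi him. pose proof (hD i ltac:(lia)). pose proof (hD (S i) ltac:(lia)).
  pose proof (hrec i hi). apply INR_lt. lra.
Qed.

Lemma in_D_digit_mono i : (1 <= i)%nat -> (S i <= m)%nat -> (tau i <= tau (S i))%nat.
Proof. intros hi him. apply Nat.lt_le_incl, in_D_digit_lt; assumption. Qed.

Lemma prod_digits_le_pow i : (i <= m)%nat -> prod_digits tau i <= 2 ^ i * prod_seq s i.
Proof.
  induction i as [| i IH]; intros hi; simpl; [lra |].
  pose proof (prod_digits_pos tau m in_D_digit_ge2 i ltac:(lia)).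
  pose proof (hD (S i) ltac:(lia)). pose proof (hst (S i) ltac:(lia)).
  specialize (IH ltac:(lia)).
  replace (2 * 2 ^ i * (prod_seq s i * s (S i)))
    with ((2 ^ i * prod_seq s i) * (2 * s (S i))) by ring.
  apply Rmult_le_compat; lra.
Qed.

End Digits.

Lemma cylinder_gap n k tau tau' :
  in_D s t (S n) tau -> in_D s t (S n) tau' -> (S k <= n)%nat ->
  (forall i, (1 <= i <= k)%nat -> tau i = tau' i) -> (tau (S k) < tau' (S k))%nat ->
  cyl_B tau' (S n) + eps_n s n <= cyl_A tau (S n).
Proof.
  intros hD hD' hk hagree hlt.
  pose proof (partial_sum_le tau (S n) (in_D_digit_ge2 _ _ hD)
    (S (S k)) (S n) ltac:(lia) ltac:(lia)) as hA.
  pose proof (cyl_B_le tau' (S n) (in_D_digit_ge2 _ _ hD') (in_D_digit_mono _ _ hD')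
    (S (S k)) (S n) ltac:(lia) ltac:(lia) ltac:(lia)) as hB.
  pose proof (cyl_A_sub_cyl_B tau tau' k hagree) as hdiff. cbv zeta in hdiff.
  pose proof (prod_digits_pos tau (S n) (in_D_digit_ge2 _ _ hD) k ltac:(lia)) as hQ.
  pose proof (prod_digits_le_pow _ _ hD k ltac:(lia)) as hQle.
  pose proof (hD (S k) ltac:(lia)). pose proof (hD (S (S k)) ltac:(lia)).
  pose proof (hD' (S k) ltac:(lia)). pose proof (hD' (S (S k)) ltac:(lia)).
  pose proof (hst (S k) ltac:(lia)). pose proof (hst (S (S k)) ltac:(lia)).
  pose proof (hrec (S k) ltac:(lia)).
  assert (hab : INR (tau (S k)) + 1 <= INR (tau' (S k))).
  { rewrite <- S_INR. apply le_INR. exact hlt. }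
  assert (hbc : INR (tau' (S k)) + 1 <= INR (tau' (S (S k)))).
  { rewrite <- S_INR. apply le_INR, (in_D_digit_lt _ _ hD'); lia. }
  set (Q := prod_digits tau k) in *.
  set (a := INR (tau (S k))) in *. set (c := INR (tau (S (S k)))) in *.
  set (b := INR (tau' (S k))) in *. set (c' := INR (tau' (S (S k)))) in *.
  pose proof (engel_gap_lower_bound a b c (c' - 1) (s (S (S k)))) as hgap.
  pose proof (eps_n_le_inv k Q b hQ hQle ltac:(lra)) as heps.
  pose proof (eps_n_le (S k) n ltac:(lia) hk).
  rewrite Rinv_mult in heps.
  assert (/ Q * / (4 * b * b) <= / Q * (/ a - / b + / (a * c) - / (b * (c' - 1)))).
  { apply Rmult_le_compat_l; [left; apply Rinv_0_lt_compat, hQ |]. apply hgap; lra. }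
  unfold cyl_A in *. lra.
Qed.

Lemma J_set_separated n sigma sigma' x y :
  in_D s t n sigma -> in_D s t n sigma' ->
  (exists k, (1 <= k <= n)%nat /\ sigma k <> sigma' k) ->
  J_set s t n sigma x -> J_set s t n sigma' y ->
  y + eps_n s n <= x \/ x + eps_n s n <= y.
Proof.
  intros hD hD' hneq hx hy.
  destruct (J_set_cylinder_bounds s t n sigma x hD hx) as [tau [hT [htau hxT]]].
  destruct (J_set_cylinder_bounds s t n sigma' y hD' hy) as [tau' [hT' [htau' hyT]]].
  destruct (first_difference sigma sigma' n hneq) as [k [hk [hagree hfirst]]].
  assert (hagreeT : forall i, (1 <= i <= k)%nat -> tau i = tau' i).
  { intros i hi. rewrite htau, htau' by lia. apply hagree, hi. }
  rewrite <- (htau (S k)), <- (htau' (S k)) in hfirst by lia.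
  destruct (Nat.lt_total (tau (S k)) (tau' (S k))) as [hlt | [heq | hgt]].
  - left. pose proof (cylinder_gap n k tau tau' hT hT' hk hagreeT hlt). lra.
  - contradiction.
  - right. pose proof (cylinder_gap n k tau' tau hT' hT hk
      (fun i hi => eq_sym (hagreeT i hi)) hgt). lra.
Qed.

End GrowthConditions.

Theorem mainTheorem3 (s t : nat -> R)
  (hpos : forall n, (1 <= n)%nat -> 0 < s n /\ 0 < t n)
  (hst : forall n, (1 <= n)%nat -> s n >= t n /\ t n >= 2)
  (hrec : forall n, (1 <= n)%nat -> s (S n) >= s n + t n)
  (n : nat) (hn : (1 <= n)%nat) (sigma sigma' : nat -> nat)
  (hD : in_D s t n sigma) (hD' : in_D s t n sigma')
  (hneq : exists k, (1 <= k <= n)%nat /\ sigma k <> sigma' k) :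
  (forall x, ~ (J_set s t n sigma x /\ J_set s t n sigma' x)) /\
  (forall x y, J_set s t n sigma x -> J_set s t n sigma' y ->
     eps_n s n <= Rabs (x - y)).
Proof.
  pose proof (eps_n_pos s t hst n hn) as heps.
  pose proof (J_set_separated s t hst hrec n sigma sigma') as hsep.
  split.
  - intros x [hx hx']. destruct (hsep x x hD hD' hneq hx hx'); lra.
  - intros x y hx hy.
    destruct (hsep x y hD hD' hneq hx hy); [rewrite Rabs_right | rewrite Rabs_left1]; lra.
Qed.
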